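(* Let $K,d,S,N$ be positive integers with $S+2\le N\le d(K-1)+S$, let $C\triangleq d(K-1)+S+1-N$, let $\boldsymbol{\mathcal{N}}=\{\mathcal{N}_g:g\in[G]\}$ be a non-straggler pattern with intersection $\mathcal{I}=\bigcap_{g\in[G]}\mathcal{N}_g$ of size $I=|\mathcal{I}|$, and let $L\triangleq N-S-I$. Let $\alpha_0,\dots,\alpha_{K-1}\in\mathbb{C}$ be data points, $\beta_0,\dots,\beta_{N-1}\in\mathbb{C}$ evaluation points and $\boldsymbol{w}\in\mathbb{C}^K$ a weight vector. Suppose that $$\sum_{k=0}^{K-1}w_k\,P_{\mathcal{I}}(\alpha_k)\,\alpha_k^j=0\quad\text{for all } j\in[C+L],$$ where $P_{\mathcal{I}}(z)\triangleq\prod_{n\in\mathcal{I}}(z-\beta_n)$. Then $$\sum_{k=0}^{K-1}w_k\,P_g(\alpha_k)\,\alpha_k^j=0\quad\text{for all } j\in[C],\ g\in[G],$$ where $P_g(z)\triangleq\prod_{n\in\mathcal{N}_g}(z-\beta_n)$.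
   Context: Notation: for a positive integer $m$, $[m]=\{0,1,\dots,m-1\}$. A non-straggler pattern is a collection $\boldsymbol{\mathcal{N}}=\{\mathcal{N}_g:g\in[G]\}$ of subsets $\mathcal{N}_g\subseteq[N]$, each of cardinality $N-S$. *)

From mathcomp Require Import all_boot all_order all_algebra.
From mathcomp Require Import complex.
From mathcomp Require Import reals.
Set Implicit Arguments. Unset Strict Implicit. Unset Printing Implicit Defensive.
Import GRing.Theory Num.Theory.
Local Open Scope ring_scope.

Definition Pset (F : nzRingType) (N : nat) (beta : 'I_N -> F)
  (A : {set 'I_N}) (z : F) : F := \prod_(n in A) (z - beta n).

Definition pattern_cap (N G : nat) (Ns : 'I_G -> {set 'I_N}) : {set 'I_N} :=
  \bigcap_(g < G) Ns g.

From mathcomp Require Import all_boot all_order all_algebra.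
From mathcomp Require Import complex.
From mathcomp Require Import reals.
Set Implicit Arguments. Unset Strict Implicit. Unset Printing Implicit Defensive.
Import GRing.Theory Num.Theory.
Local Open Scope ring_scope.

(* Since the intersection I of the pattern lies in every N_g, P_g = P_I * Q_g
   with Q_g of degree |N_g \ I| = L. Hence P_g(z) z^j = P_I(z) q(z) for a
   polynomial q of degree L + j < C + L, and the weighted sum for P_g is a linear
   combination of the vanishing weighted sums for P_I. *)

Section VanishingMoments.
Variables (F : comNzRingType) (K : nat) (c a : 'I_K -> F).

Lemma sum_horner_eq0 (m : nat) (p : {poly F}) :
  (size p <= m)%N ->
  (forall i, (i < m)%N -> \sum_(k < K) c k * a k ^+ i = 0) ->
  \sum_(k < K) c k * p.[a k] = 0.
Proof.
move=> size_p moments0.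
under eq_bigr => k _ do rewrite horner_coef mulr_sumr.
rewrite exchange_big big1 //= => i _.
under eq_bigr => k _ do rewrite mulrCA.
by rewrite -mulr_sumr moments0 ?mulr0 // (leq_trans _ size_p).
Qed.

End VanishingMoments.

Section RootProducts.
Variables (F : comNzRingType) (N : nat) (beta : 'I_N -> F).

Definition Pset_poly (A : {set 'I_N}) : {poly F} := \prod_(n in A) ('X - (beta n)%:P).

Lemma horner_Pset_poly A z : (Pset_poly A).[z] = Pset beta A z.
Proof.
by rewrite horner_prod; apply: eq_bigr => n _; rewrite hornerXsubC.
Qed.

Lemma monic_Pset_poly A : Pset_poly A \is monic.
Proof. exact: monic_prod_XsubC. Qed.

Lemma size_Pset_poly A : size (Pset_poly A) = #|A|.+1.
Proof. by rewrite /Pset_poly -big_enum size_prod_XsubC cardE. Qed.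

Lemma Pset_setD (A B : {set 'I_N}) (z : F) :
  A \subset B -> Pset beta B z = Pset beta A z * Pset beta (B :\: A) z.
Proof. by move=> AB; rewrite /Pset (big_setID A) (setIidPr AB). Qed.

End RootProducts.

Theorem lemma2 (R : realType) (K d S N G : nat)
  (HK : (0 < K)%N) (Hd : (0 < d)%N) (HS : (0 < S)%N) (HN : (0 < N)%N)
  (HSN : (S + 2 <= N)%N) (HNd : (N <= d * (K - 1) + S)%N)
  (Ns : 'I_G -> {set 'I_N})
  (HNs : forall g : 'I_G, #|Ns g| = (N - S)%N)
  (alpha : 'I_K -> R[i]) (beta : 'I_N -> R[i]) (w : 'I_K -> R[i]) :
  let C := (d * (K - 1) + S + 1 - N)%N in
  let I := #|pattern_cap Ns| in
  let L := (N - S - I)%N in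
  (forall j : nat, (j < C + L)%N ->
     \sum_(k < K) w k * Pset beta (pattern_cap Ns) (alpha k) * alpha k ^+ j = 0) ->
  forall (j : nat) (g : 'I_G), (j < C)%N ->
     \sum_(k < K) w k * Pset beta (Ns g) (alpha k) * alpha k ^+ j = 0.
Proof.
move=> C I L moments0 j g lt_jC.
have capN : pattern_cap Ns \subset Ns g by apply: bigcap_inf.
have card_diff : #|Ns g :\: pattern_cap Ns| = L.
  by rewrite cardsD (setIidPr capN) HNs.
pose q := Pset_poly beta (Ns g :\: pattern_cap Ns) * 'X^j.
have size_q : (size q <= C + L)%N.
  rewrite size_mulXn ?monic_neq0 ?monic_Pset_poly // size_Pset_poly card_diff.
  by rewrite addnS ltn_add2r.
rewrite -[RHS](sum_horner_eq0 (a := alpha) size_q moments0).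
apply: eq_bigr => k _.
by rewrite (Pset_setD _ _ capN) hornerM hornerXn horner_Pset_poly !mulrA.
Qed.
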